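(* Let $P$ be a $k\times k$ permutation matrix and let $m$ and $n$ be relatively prime positive integers. Then there are diagonal integer matrices $D_1$ and $D_2$ of size $k\times k$ satisfying $\gcd(\det(D_1), m) = 1$, $\gcd(\det(D_2), n) = 1$, and $\det(nD_1 + mD_2P) = 1$. *)

From mathcomp Require Import all_boot all_order all_algebra all_fingroup.
Set Implicit Arguments.
Unset Strict Implicit.
Unset Printing Implicit Defensive.

From mathcomp Require Import all_boot all_order all_algebra all_fingroup.
Import GRing.Theory Num.Theory.
Local Open Scope ring_scope.

(* Write the matrix as D_x + D_y P_s.  A permutation t contributes to its
   Leibniz expansion only if t j is j or s j for every j, and on each cycle C
   of s such a t is either the identity or s itself, so the determinant is
   the product over the cycles of prod_C x + (-1)^(|C|-1) prod_C y.  Take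
   x = n a and y = m b with a, b equal to 1 except at one point of each
   cycle C, of length L; there the factor becomes n^L u +- m^L v, and Bezout
   for the coprime n^L and m^L makes it 1 with u prime to m and v prime to n. *)

Section PermOrbits.

Context {T : finType}.
Implicit Types (s : {perm T}) (C S : {set T}) (i j : T).

Lemma porbit_fclosed s i : fclosed s (porbit s i).
Proof.
move=> j _ /eqP <-; rewrite -!eq_porbit_mem.
by have := porbit_perm s 1 j; rewrite expg1 => ->.
Qed.

Lemma fclosed_perm {s C} : fclosed s C -> forall j, (s j \in C) = (j \in C).
Proof. by move=> clC j; rewrite (clC j (s j)) //=. Qed.

Lemma fclosed_iter {s C} : fclosed s C -> forall n j, ((s ^+ n)%g j \in C) = (j \in C).
Proof.
move=> clC n j; elim: n => [|n IHn]; first by rewrite expg0 perm1.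
by rewrite expgSr permM (fclosed_perm clC).
Qed.

Lemma porbit_subset {s C i} : fclosed s C -> i \in C -> porbit s i \subset C.
Proof. by move=> clC iC; apply/subsetP => j /porbitP[n ->]; rewrite (fclosed_iter clC). Qed.

Lemma fclosedD {s C S} : fclosed s C -> fclosed s S -> fclosed s (S :\: C).
Proof. by move=> clC clS j _ /eqP <-; rewrite !inE (fclosed_perm clC) (fclosed_perm clS). Qed.

Lemma card_porbit_gt0 s i : (0 < #|porbit s i|)%N.
Proof. by rewrite lt0n card_porbit_neq0. Qed.

Lemma porbit_fixed {s i} : s i = i -> porbit s i = [set i].
Proof.
move=> si; apply/setP => j; rewrite inE.
by apply/porbitP/eqP => [[n ->]|->]; [rewrite permX_fix | exists 0%N; rewrite perm1].
Qed.

Lemma porbit_moved {s i j} : s i != i -> j \in porbit s i -> s j != j.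
Proof.
move=> si; rewrite -eq_porbit_mem => /eqP eq_ji; apply: contraNneq si => sj.
by move: (porbit_id s i); rewrite -eq_ji (porbit_fixed sj) inE => /eqP ->; rewrite sj.
Qed.

Lemma porbit_disjoint s i j :
  (porbit s i != porbit s j) = [disjoint porbit s i & porbit s j].
Proof.
apply/idP/idP => [neq_ij | dis_ij].
  apply/pred0P => l /=; apply: contraNF neq_ij => /andP[li lj].
  have eq_li : porbit s l = porbit s i by apply/eqP; rewrite eq_porbit_mem.
  by rewrite -eq_li eq_porbit_mem.
apply: contraTneq dis_ij => ->; rewrite -setI_eq0 setIid.
by apply/set0Pn; exists j; apply: porbit_id.
Qed.

Section RestrictPerm.

Context {s : {perm T}} {C : {set T}}.
Hypothesis clC : fclosed s C.

Lemma restrict_perm_inj : injective (fun j => if j \in C then s j else j).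
Proof.
move=> j l /=; case jC: (j \in C); case lC: (l \in C) => //; first exact: perm_inj.
  by move=> eq_jl; rewrite -eq_jl (fclosed_perm clC) jC in lC.
by move=> eq_jl; rewrite eq_jl (fclosed_perm clC) lC in jC.
Qed.

Definition restrict_perm := perm restrict_perm_inj.

Lemma restrict_permE j : restrict_perm j = if j \in C then s j else j.
Proof. by rewrite permE. Qed.

Lemma restrict_permX n j : j \in C -> (restrict_perm ^+ n)%g j = (s ^+ n)%g j.
Proof.
move=> jC; elim: n => [|n IHn]; first by rewrite !expg0.
by rewrite !expgSr !permM IHn restrict_permE (fclosed_iter clC) jC.
Qed.

Lemma porbit_restrict_perm j :
  porbit restrict_perm j = if j \in C then porbit s j else [set j].
Proof.
case: ifP => jC; last by apply: porbit_fixed; rewrite restrict_permE jC.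
by apply/setP => l; apply/porbitP/porbitP => -[n ->]; exists n; rewrite restrict_permX.
Qed.

End RestrictPerm.

Lemma porbits_restrict_porbit s i :
  porbits (restrict_perm (porbit_fclosed s i)) =
  porbit s i |: [set [set j] | j in ~: porbit s i].
Proof.
apply/setP => X; rewrite !inE; apply/imsetP/orP => [[j _ ->] | [/eqP -> | ]].
- rewrite porbit_restrict_perm; case: ifP => jC; first by rewrite eq_porbit_mem jC; left.
  by right; apply/imsetP; exists j; rewrite // inE jC.
- by exists i; rewrite // porbit_restrict_perm porbit_id.
case/imsetP => j; rewrite inE => /negPf jC ->.
by exists j; rewrite // porbit_restrict_perm jC.
Qed.

Lemma odd_restrict_porbit s i :
  odd_perm (restrict_perm (porbit_fclosed s i)) = odd #|porbit s i|.-1.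
Proof.
set C := porbit s i.
have C_single : C \notin [set [set j] | j in ~: C].
  apply/imsetP => -[j]; rewrite inE => /negP jC eq_C; apply: jC.
  by rewrite eq_C set11.
rewrite /odd_perm porbits_restrict_porbit cardsU1 C_single card_imset; last exact: set1_inj.
rewrite -(cardsC C) oddD /=.
by case: #|C| (card_porbit_neq0 s i) => //= L _; case: (odd L); case: (odd _).
Qed.

Lemma perm_supported_porbit s i (t : {perm T}) :
  (forall j, if j \in porbit s i then (t j == j) || (t j == s j) else t j == j) ->
  t = 1%g \/ t = restrict_perm (porbit_fclosed s i).
Proof.
move=> supp_t; have clC := porbit_fclosed s i.
have [-> | t1] := eqVneq t 1%g; [by left | right].
have [j0 moved_j0] : exists j0, t j0 != j0.
  apply/existsP; apply: contraR t1 => /existsPn fix_t.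
  by apply/eqP/permP => j; rewrite perm1; apply/eqP/negPn.
have j0C : j0 \in porbit s i.
  by apply: contraR moved_j0 => /negPf j0C; have := supp_t j0; rewrite j0C.
have t_follows_s n : t ((s ^+ n)%g j0) = s ((s ^+ n)%g j0).
  elim: n => [|n IHn].
    by have := supp_t j0; rewrite j0C perm1 (negPf moved_j0) => /eqP.
  rewrite expgSr permM; set z := (s ^+ n)%g j0 in IHn *.
  have := supp_t (s z); rewrite (fclosed_perm clC) (fclosed_iter clC) j0C.
  case/orP => /eqP // tsz.
  have sz : s z = z by apply: (@perm_inj _ t); rewrite tsz IHn.
  by rewrite tsz {2}sz.
apply/permP => j; rewrite restrict_permE; case: ifP => jC.
  have eq_j0 : porbit s j0 = porbit s i by apply/eqP; rewrite eq_porbit_mem.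
  by have /porbitP[n ->] : j \in porbit s j0 by rewrite eq_j0.
by have := supp_t j; rewrite jC => /eqP.
Qed.

End PermOrbits.

Section DiagPermMx.

Context {R : comPzRingType} {k : nat}.
Variables (s : 'S_k) (x y : 'I_k -> R).
Implicit Types (C S : {set 'I_k}).

(* Rows outside S are those of the identity, so the matrix splits as a
   product along s-stable pieces of S. *)
Definition diag_perm_mx S : 'M[R]_k :=
  \matrix_(i, j) if i \in S then x i * (i == j)%:R + y i * (s i == j)%:R
                 else (i == j)%:R.

Definition cycle_det C := \prod_(j in C) x j + (-1) ^+ #|C|.-1 * \prod_(j in C) y j.

Lemma diag_perm_mx0 : diag_perm_mx set0 = 1%:M.
Proof. by apply/matrixP => i j; rewrite !mxE inE. Qed.

Lemma diag_perm_mxD {C S} : fclosed s C -> C \subset S ->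
  diag_perm_mx S = diag_perm_mx C *m diag_perm_mx (S :\: C).
Proof.
move=> clC sCS; apply/matrixP => i j; have [iC | iNC] := boolP (i \in C).
  transitivity (diag_perm_mx C i j); first by rewrite !mxE iC (subsetP sCS).
  rewrite -{1}(mulmx1 (diag_perm_mx C)) !mxE; apply: eq_bigr => l _.
  rewrite !mxE inE; have [lC | lNC] := boolP (l \in C); first by [].
  have /negPf -> : i != l by apply: contraNneq lNC => <-.
  have /negPf -> : s i != l by apply: contraNneq lNC => <-; rewrite (fclosed_perm clC).
  by rewrite iC !mulr0 addr0 !mul0r.
transitivity (diag_perm_mx (S :\: C) i j); first by rewrite !mxE inE iNC.
rewrite -{1}(mul1mx (diag_perm_mx (S :\: C))) !mxE; apply: eq_bigr => l _.
by rewrite [1%:M i l]mxE [diag_perm_mx C i l]mxE (negPf iNC).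
Qed.

Lemma det_diag_perm_porbit i :
  \det (diag_perm_mx (porbit s i)) = cycle_det (porbit s i).
Proof.
set C := porbit s i; set A := diag_perm_mx C; set sC := restrict_perm (porbit_fclosed s i).
have term0 t : t != 1%g -> t != sC -> (-1) ^+ t * \prod_j A j (t j) = 0.
  move=> t1 tsC; have /forallPn[j] :
      ~~ [forall j, if j \in C then (t j == j) || (t j == s j) else t j == j].
    by apply/forallP => /perm_supported_porbit[]; apply/eqP.
  rewrite (bigD1 j) //= mxE ![t j == _]eq_sym.
  by case: (j \in C) => [/norP[/negPf-> /negPf->] | /negPf->]; rewrite ?mulr0 ?addr0 mul0r mulr0.
rewrite /determinant (bigD1 1%g) //= odd_perm1 mul1r.
have [si | si] := eqVneq (s i) i.
  have eqC : C = [set i] by apply: porbit_fixed.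
  have sC1 : sC = 1%g.
    by apply/permP => j; rewrite restrict_permE perm1 -/C eqC inE; case: eqP => // ->.
  rewrite [X in _ + X]big1 ?addr0 => [|t t1]; last by rewrite term0 // sC1.
  rewrite /cycle_det eqC cards1 !big_set1 mul1r (bigD1 i) //= big1 ?mulr1.
    by rewrite mxE perm1 eqC inE eqxx si eqxx !mulr1.
  by move=> j ji; rewrite mxE perm1 eqC inE (negPf ji) eqxx.
have sC1 : sC != 1%g.
  by apply: contraNneq si => /permP/(_ i); rewrite restrict_permE porbit_id perm1 => ->.
rewrite (bigD1 sC) //= [X in _ + (_ + X)]big1 ?addr0 => [|t /andP[t1 tsC]]; last exact: term0.
rewrite /cycle_det odd_restrict_porbit signr_odd; congr (_ + _ * _).
  rewrite [in RHS]big_mkcond; apply: eq_bigr => j _; rewrite mxE perm1 eqxx.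
  by case: ifP => // jC; rewrite (negPf (porbit_moved si jC)) mulr0 addr0 mulr1.
rewrite [in RHS]big_mkcond; apply: eq_bigr => j _; rewrite mxE restrict_permE -/C.
have [jC | _] := boolP (j \in C); last by rewrite eqxx.
by rewrite eqxx eq_sym (negPf (porbit_moved si jC)) mulr0 add0r mulr1.
Qed.

Lemma det_diag_perm_mx S : fclosed s S ->
  \det (diag_perm_mx S) = \prod_(C in porbits s | C \subset S) cycle_det C.
Proof.
elim: {S}_.+1 {-2}S (ltnSn #|S|) => // c IHc S leSc clS.
have [-> | [i iS]] := set_0Vmem S.
  rewrite diag_perm_mx0 det1 big1 // => _ /andP[/imsetP[j _ ->]].
  by move/subsetP/(_ j (porbit_id s j)); rewrite inE.
set C := porbit s i; have clC : fclosed s C := porbit_fclosed s i.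
have sCS : C \subset S := porbit_subset clS iS.
rewrite (diag_perm_mxD clC sCS) det_mulmx det_diag_perm_porbit IHc; first last.
- exact: fclosedD.
- rewrite cardsDS // -ltnS (leq_trans _ leSc) // ltnS ltn_subrL.
  by rewrite !card_gt0; apply/andP; split; apply/set0Pn; exists i; rewrite ?porbit_id.
rewrite [RHS](bigD1 C) /=; last by rewrite imset_f.
congr (_ * _); apply: eq_bigl => D; rewrite subsetD -andbA.
have [/imsetP[j _ ->] | //] := boolP (D \in porbits s).
by rewrite -porbit_disjoint andbC.
Qed.

End DiagPermMx.

Section PorbitMark.

Context {T : finType} {R : comPzSemiRingType}.
Variables (s : {perm T}) (F : {set T} -> R).

Definition porbit_head (j : T) := odflt j [pick l in porbit s j].

Lemma porbit_head_mem j : porbit_head j \in porbit s j.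
Proof. by rewrite /porbit_head; case: pickP => [l -> // | /(_ j)]; rewrite porbit_id. Qed.

Lemma porbit_headE {i j} : j \in porbit s i -> porbit_head j = porbit_head i.
Proof.
rewrite -eq_porbit_mem => /eqP eq_ji; rewrite /porbit_head eq_ji.
by case: pickP => // /(_ i); rewrite porbit_id.
Qed.

Definition porbit_mark j := if j == porbit_head j then F (porbit s j) else 1.

Lemma prod_porbit_mark i : \prod_(j in porbit s i) porbit_mark j = F (porbit s i).
Proof.
rewrite -big_mkcondr (big_pred1 (porbit_head i)) => [|j /=].
  by congr F; apply/eqP; rewrite eq_porbit_mem porbit_head_mem.
have [ji | jNi] := boolP (j \in porbit s i); first by rewrite (porbit_headE ji).
by apply/esym; apply: contraNF jNi => /eqP ->; apply: porbit_head_mem.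
Qed.

Lemma porbit_mark_ind (P : R -> Prop) j :
  P 1 -> (forall i, P (F (porbit s i))) -> P (porbit_mark j).
Proof. by move=> P1 PF; rewrite /porbit_mark; case: ifP. Qed.

End PorbitMark.

Lemma coprime1z (m : int) : coprimez 1 m.
Proof. by rewrite /coprimez gcd1z. Qed.

Lemma egcdz_coprime (a b : int) : coprimez a b ->
  [/\ (egcdz a b).1 * a + (egcdz a b).2 * b = 1,
      coprimez (egcdz a b).1 b & coprimez (egcdz a b).2 a].
Proof.
move=> cop_ab; case: egcdzP => u v /= Buv _; rewrite (eqP cop_ab) in Buv.
by split=> //; apply/coprimezP; [exists (a, v) | exists (b, u)]; rewrite /= -Buv mulrC // addrC.
Qed.

Lemma coprimez_prodl (I : finType) (P : pred I) (F : I -> int) (m : int) :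
  (forall i, P i -> coprimez (F i) m) -> coprimez (\prod_(i | P i) F i) m.
Proof.
move=> copF; apply: (big_ind (fun z => coprimez z m)) => //; first exact: coprime1z.
by move=> u v cu cv; rewrite coprimezMl cu.
Qed.

Lemma egcdz_pow_coprime {m n L : nat} : coprime m n -> (0 < L)%N ->
  let uv := egcdz (n%:Z ^+ L) (m%:Z ^+ L) in
  [/\ uv.1 * n%:Z ^+ L + uv.2 * m%:Z ^+ L = 1, coprimez uv.1 m & coprimez uv.2 n].
Proof.
move=> cop_mn L_gt0 /=; rewrite -(coprimez_pexpr _ m%:Z L_gt0) -(coprimez_pexpr _ n%:Z L_gt0).
by apply: egcdz_coprime; apply/coprimezXl/coprimezXr; rewrite coprimezE /= coprime_sym.
Qed.

Lemma coprimez_signl (e : nat) (a b : int) : coprimez ((-1) ^+ e * a) b = coprimez a b.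
Proof. by rewrite -signr_odd; case: odd; rewrite ?expr1 ?expr0 ?mulN1r ?mul1r ?coprimeNz. Qed.

Theorem lemma3p5 (k : nat) (s : 'S_k) (m n : nat)
    (hm : (0 < m)%N) (hn : (0 < n)%N) (hmn : coprime m n) :
  exists d1 d2 : 'rV[int]_k,
    [/\ gcdz (\det (diag_mx d1)) m%:Z = 1,
        gcdz (\det (diag_mx d2)) n%:Z = 1 &
        \det (n%:Z *: diag_mx d1 + m%:Z *: (diag_mx d2 *m perm_mx s)) = 1].
Proof.
pose bez L := egcdz (n%:Z ^+ L) (m%:Z ^+ L).
have bezP i := egcdz_pow_coprime hmn (card_porbit_gt0 s i).
pose a := porbit_mark s (fun C => (bez #|C|).1).
(* The sign in [b] cancels the sign of the cycle in [cycle_det]. *)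
pose b := porbit_mark s (fun C => (-1) ^+ #|C|.-1 * (bez #|C|).2).
exists (\row_j a j), (\row_j b j); split.
- apply/eqP; rewrite det_diag; apply: coprimez_prodl => j _; rewrite mxE.
  apply: (porbit_mark_ind _ _ (fun z => coprimez z _)) => [|i]; first exact: coprime1z.
  by have [] := bezP i.
- apply/eqP; rewrite det_diag; apply: coprimez_prodl => j _; rewrite mxE.
  apply: (porbit_mark_ind _ _ (fun z => coprimez z _)) => [|i]; first exact: coprime1z.
  by rewrite coprimez_signl; have [] := bezP i.
rewrite (_ : _ + _ = diag_perm_mx s (fun j => n%:Z * a j) (fun j => m%:Z * b j) setT).
  rewrite det_diag_perm_mx => [|j l _]; last by rewrite !inE.
  apply: big1 => C /andP[/imsetP[i _ ->] _].
  rewrite /cycle_det !big_split !prodr_const /= !prod_porbit_mark mulrCA signrMK.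
  by have [Bez _ _] := bezP i; rewrite !(mulrC (_ ^+ _)).
apply/matrixP => i j; rewrite mul_diag_mx !mxE inE /=.
by case: (i == j); case: (s i == j); rewrite /= ?mulr0 ?mulr1 ?addr0 ?add0r.
Qed.
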